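(* Let $\Gamma,\Delta$ be finite sets of formulas, $\alpha$ an atomic mapping for $\Gamma\cup\Delta$, and $\mathcal{U}$ the simulation base for $\Gamma\cup\Delta$ and $\alpha$. Let $\Theta_{\mathsf{At}}$ be any (possibly empty) finite set of atoms, $\Sigma$ any non-empty finite set of subformulas of formulas in $\Gamma\cup\Delta$, and $\Sigma_{\mathsf{At}}=\{p^B\mid B\in\Sigma\}$. Then for every base $\mathcal{B}\supseteq\mathcal{U}_{\mathcal{ST}}$: $\Vdash_{\mathcal{B}}\Sigma,\Theta_{\mathsf{At}}$ if and only if $\vdash_{\mathcal{B}}\ \Rightarrow\Sigma_{\mathsf{At}},\Theta_{\mathsf{At}}$.
   Context: Fix a countably infinite set $\mathsf{At}$ of atoms. Formulas are built from atoms and the constant $\bot$ using the binary connectives $\land,\lor,\to$. All contexts are finite sets (not multisets) of formulas; a comma denotes union; a subscript $\mathsf{At}$ indicates a finite set of atoms. An atomic sequent has the form $\Gamma_{\mathsf{At}} \Rightarrow \Delta_{\mathsf{At}}$. An atomic rule has finitely many (possibly zero) atomic sequents as premises and one atomic sequent as conclusion; a rule with zero premises is an atomic axiom. A base is a (possibly empty) set of atomic rules; $\mathcal{C}\supseteq\mathcal{B}$ ($\mathcal{C}$ extends $\mathcal{B}$) if $\mathcal{C}$ contains every rule of $\mathcal{B}$. Derivability $\vdash_{\mathcal{B}}$ of atomic sequents is the least relation such that: (Axiom/Weakening) if an atomic axiom with conclusion $\Gamma_{\mathsf{At}}\Rightarrow\Delta_{\mathsf{At}}$ is in $\mathcal{B}$,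 then $\vdash_{\mathcal{B}} \Theta_{\mathsf{At}},\Gamma_{\mathsf{At}}\Rightarrow\Delta_{\mathsf{At}},\Sigma_{\mathsf{At}}$ for all sets of atoms $\Theta_{\mathsf{At}},\Sigma_{\mathsf{At}}$; (Mix) if a rule with premises $\Gamma^i_{\mathsf{At}}\Rightarrow\Delta^i_{\mathsf{At}}$ ($1\le i\le n$) and conclusion $\Gamma_{\mathsf{At}}\Rightarrow\Delta_{\mathsf{At}}$ is in $\mathcal{B}$ and $\vdash_{\mathcal{B}} \Theta^i_{\mathsf{At}},\Gamma^i_{\mathsf{At}}\Rightarrow\Delta^i_{\mathsf{At}},\Sigma^i_{\mathsf{At}}$ for each $i$, then $\vdash_{\mathcal{B}} \Theta^1_{\mathsf{At}},\dots,\Theta^n_{\mathsf{At}},\Gamma_{\mathsf{At}}\Rightarrow\Delta_{\mathsf{At}},\Sigma^1_{\mathsf{At}},\dots,\Sigma^n_{\mathsf{At}}$. Support $\Vdash_{\mathcal{B}}$: (At) $\Vdash_{\mathcal{B}}\Gamma_{\mathsf{At}}$ iff $\vdash_{\mathcal{B}}\ \Rightarrow\Gamma_{\mathsf{At}}$; ($\land$) $\Vdash_{\mathcal{B}} A\land B,\Gamma$ iff $\Vdash_{\mathcal{B}}A,\Gamma$ and $\Vdash_{\mathcal{B}}B,\Gamma$; ($\lor$) $\Vdash_{\mathcal{B}}A\lor B,\Gamma$ iff $\Vdash_{\mathcal{B}}A,B,\Gamma$; ($\to$) $\Vdash_{\mathcal{B}}A\to B,\Gamma$ iff $A\Vdash_{\mathcal{B}}B,\Gamma$;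 ($\bot$) $\Vdash_{\mathcal{B}}\bot,\Gamma$ iff $\Vdash_{\mathcal{B}}\Gamma$; (Inf) for $n\ge1$, $\{A^1,\dots,A^n\}\Vdash_{\mathcal{B}}\Delta$ iff for every $\mathcal{C}\supseteq\mathcal{B}$ and all sets of atoms $\Theta^1_{\mathsf{At}},\dots,\Theta^n_{\mathsf{At}}$, if $\Vdash_{\mathcal{C}}\Theta^i_{\mathsf{At}},A^i$ for all $i$ then $\Vdash_{\mathcal{C}}\Theta^1_{\mathsf{At}},\dots,\Theta^n_{\mathsf{At}},\Delta$ (and $\varnothing\Vdash_{\mathcal{B}}\Delta$ means $\Vdash_{\mathcal{B}}\Delta$). The atomic identity rule $\mathsf{Ainit}$ is the atomic axiom $\Gamma_{\mathsf{At}},p\Rightarrow p,\Delta_{\mathsf{At}}$; the atomic cut rule $\mathsf{Acut}$ has premises $\Gamma^1_{\mathsf{At}}\Rightarrow\Delta^1_{\mathsf{At}},p$ and $p,\Gamma^2_{\mathsf{At}}\Rightarrow\Delta^2_{\mathsf{At}}$ and conclusion $\Gamma^1_{\mathsf{At}},\Gamma^2_{\mathsf{At}}\Rightarrow\Delta^1_{\mathsf{At}},\Delta^2_{\mathsf{At}}$. $\mathcal{ST}$ is the base consisting of all instances of $\mathsf{Ainit}$ and $\mathsf{Acut}$. Atomic mapping: for a set of formulas $\Sigma_0$ with set of subformulas $S$, an atomic mapping is an injective function $\alpha:S\to\mathsf{At}$ with $\alpha(p)=p$ for every atom $p\in S$; write $p^A:=\alpha(A)$ (so $p^p=p$ for atoms).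 The simulation base $\mathcal{U}$ for $\Sigma_0$ and $\alpha$ consists exactly of the following atomic rules, for all formulas $A,B$ such that the displayed compound formula lies in $S$ (and for $p^\bot$ when $\bot\in S$), and all sets of atoms $\Gamma_{\mathsf{At}},\Delta_{\mathsf{At}},\Gamma'_{\mathsf{At}},\Delta'_{\mathsf{At}}$ (write $\Gamma,\Delta,\Gamma',\Delta'$ for these): $L\land$: from $p^A,p^B,\Gamma\Rightarrow\Delta$ infer $p^{A\land B},\Gamma\Rightarrow\Delta$; $R\land$: from $\Gamma\Rightarrow\Delta,p^A$ and $\Gamma'\Rightarrow\Delta',p^B$ infer $\Gamma,\Gamma'\Rightarrow\Delta,\Delta',p^{A\land B}$; $L\lor$: from $p^A,\Gamma\Rightarrow\Delta$ and $p^B,\Gamma'\Rightarrow\Delta'$ infer $p^{A\lor B},\Gamma,\Gamma'\Rightarrow\Delta,\Delta'$; $R\lor$: from $\Gamma\Rightarrow\Delta,p^A,p^B$ infer $\Gamma\Rightarrow\Delta,p^{A\lor B}$; $L\to$: from $\Gamma\Rightarrow\Delta,p^A$ and $p^B,\Gamma'\Rightarrow\Delta'$ infer $p^{A\to B},\Gamma,\Gamma'\Rightarrow\Delta,\Delta'$; $R\to$: from $p^A,\Gamma\Rightarrow\Delta,p^B$ infer $\Gamma\Rightarrow\Delta,p^{A\to B}$; $R\bot$: from $\Gamma\Rightarrow\Delta$ infer $\Gamma\Rightarrow\Delta,p^\bot$; $L\bot$: axiom $\Gamma,p^\bot\Rightarrow\Delta$. Put $\mathcal{U}_{\mathcal{ST}}:=\mathcal{U}\cup\mathcal{ST}$.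 *)

From HB Require Import structures.
From mathcomp Require Import all_boot.
From mathcomp Require Import finmap.

Set Implicit Arguments.
Unset Strict Implicit.
Unset Printing Implicit Defensive.

Local Open Scope fset_scope.

Definition atom := nat.

Inductive form : Type :=
| Atom of atom
| Bot
| And of form & form
| Or of form & form
| Imp of form & form.

Definition form_eq_dec : forall x y : form, {x = y} + {x <> y}.
Proof. decide equality; exact: (decP eqP). Defined.

HB.instance Definition _ := hasDecEq.Build form (compareP form_eq_dec).

Fixpoint subformulas (A : form) : seq form :=
  match A with
  | Atom _ | Bot => [:: A]
  | And B C | Or B C | Imp B C => A :: subformulas B ++ subformulas C
  end.

Definition subformulas_of (G : seq form) : seq form :=
  flatten (map subformulas G).

(* Atomic sequents: pairs of finite sets of atoms (antecedent, succedent). *)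
Definition sequent := ({fset atom} * {fset atom})%type.

Record rule := mkRule { premises : seq sequent; conclusion : sequent }.

Definition base := rule -> Prop.

Definition extends (B C : base) : Prop := forall r, B r -> C r.

Definition bigU (s : seq {fset atom}) : {fset atom} := \bigcup_(t <- s) t.

Inductive derivable (B : base) : sequent -> Prop :=
| der_ax (r : rule) (G D Th Si : {fset atom}) :
    B r -> premises r = [::] -> conclusion r = (G, D) ->
    derivable B (Th `|` G, D `|` Si)
| der_mix (r : rule) (G D : {fset atom}) (ths sis : seq {fset atom}) :
    B r -> conclusion r = (G, D) ->
    size ths = size (premises r) -> size sis = size (premises r) ->
    (forall i, i < size (premises r) ->
       derivable B (nth fset0 ths i `|` (nth (fset0, fset0) (premises r) i).1,
                    (nth (fset0, fset0) (premises r) i).2 `|` nth fset0 sis i)) ->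
    derivable B (bigU ths `|` G, D `|` bigU sis).

(* Size measure used as fuel for the recursive definition of support. *)
Fixpoint fsize (A : form) : nat :=
  match A with
  | Atom _ | Bot => 1
  | And B C | Or B C | Imp B C => (fsize B + fsize C).+1
  end.

Definition lsize (G : seq form) : nat := sumn (map fsize G).

(* supn n B acc G : support of the context G, acc (acc a set of atoms already
   extracted), in base B, with fuel n (fuel lsize G suffices).  Compound
   formulas are decomposed following the clauses (and), (or), (->), (bot);
   atoms are moved into acc; (At) applies when only atoms are left.  The
   (->) clause unfolds (Inf) with n = 1. *)
Fixpoint supn (n : nat) (B : base) (acc : {fset atom}) (G : seq form) {struct n}
  : Prop :=
  match G with
  | [::] => derivable B (fset0, acc)
  | A :: G' =>
    match n with
    | 0 => False
    | n'.+1 =>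
      match A with
      | Atom p => supn n' B (p |` acc) G'
      | Bot => supn n' B acc G'
      | And A1 A2 => supn n' B acc (A1 :: G') /\ supn n' B acc (A2 :: G')
      | Or A1 A2 => supn n' B acc (A1 :: A2 :: G')
      | Imp A1 A2 =>
          forall C : base, extends B C ->
          forall Th : {fset atom}, supn n' C Th [:: A1] ->
          supn n' C (Th `|` acc) (A2 :: G')
      end
    end
  end.

Definition supports (B : base) (Th : {fset atom}) (G : seq form) : Prop :=
  supn (lsize G) B Th G.

Definition atomic_mapping (G0 : seq form) (alpha : form -> atom) : Prop :=
  {in subformulas_of G0 &, injective alpha} /\
  (forall p, Atom p \in subformulas_of G0 -> alpha (Atom p) = p).

Inductive sim_base (S : seq form) (alpha : form -> atom) : base :=
| U_Land A B (G D : {fset atom}) : And A B \in S ->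
    sim_base S alpha (mkRule [:: (alpha A |` (alpha B |` G), D)]
                             (alpha (And A B) |` G, D))
| U_Rand A B (G D G' D' : {fset atom}) : And A B \in S ->
    sim_base S alpha (mkRule [:: (G, alpha A |` D); (G', alpha B |` D')]
                             (G `|` G', alpha (And A B) |` (D `|` D')))
| U_Lor A B (G D G' D' : {fset atom}) : Or A B \in S ->
    sim_base S alpha (mkRule [:: (alpha A |` G, D); (alpha B |` G', D')]
                             (alpha (Or A B) |` (G `|` G'), D `|` D'))
| U_Ror A B (G D : {fset atom}) : Or A B \in S ->
    sim_base S alpha (mkRule [:: (G, alpha A |` (alpha B |` D))]
                             (G, alpha (Or A B) |` D))
| U_Limp A B (G D G' D' : {fset atom}) : Imp A B \in S ->
    sim_base S alpha (mkRule [:: (G, alpha A |` D); (alpha B |` G', D')]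
                             (alpha (Imp A B) |` (G `|` G'), D `|` D'))
| U_Rimp A B (G D : {fset atom}) : Imp A B \in S ->
    sim_base S alpha (mkRule [:: (alpha A |` G, alpha B |` D)]
                             (G, alpha (Imp A B) |` D))
| U_Rbot (G D : {fset atom}) : Bot \in S ->
    sim_base S alpha (mkRule [:: (G, D)] (G, alpha Bot |` D))
| U_Lbot (G D : {fset atom}) : Bot \in S ->
    sim_base S alpha (mkRule [::] (alpha Bot |` G, D)).

Inductive ST : base :=
| ST_init (p : atom) (G D : {fset atom}) :
    ST (mkRule [::] (p |` G, p |` D))
| ST_cut (p : atom) (G1 D1 G2 D2 : {fset atom}) :
    ST (mkRule [:: (G1, p |` D1); (p |` G2, D2)] (G1 `|` G2, D1 `|` D2)).

Definition UST (S : seq form) (alpha : form -> atom) : base :=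
  fun r => sim_base S alpha r \/ ST r.

From Pilot Require Import Defs.
From HB Require Import structures.
From mathcomp Require Import all_boot.
From mathcomp Require Import finmap.
From mathcomp Require Import zify.

Set Implicit Arguments.
Unset Strict Implicit.
Unset Printing Implicit Defensive.

Local Open Scope fset_scope.

(* By induction on the context, every support clause is matched by derivability
   with the corresponding atom p^A in the succedent.  The right rules of U build
   p^A from the atoms of its immediate subformulas; conversely, cutting against
   the left rule of U together with an instance of Ainit decomposes p^A again.
   The clause for implications quantifies over extensions of the base: to
   recover p^(A1 -> A2) one extends the base by the axiom => p^A1 and moves p^A1
   to the antecedent by a deduction theorem, which is a consequence of Ainit. *)

Lemma bigU_nseq (X : {fset atom}) n : Defs.bigU (nseq n.+1 X) = X.
Proof.
elim: n => [|n IH]; first by rewrite /Defs.bigU big_cons big_nil fsetU0.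
by rewrite /Defs.bigU [nseq _ _]/= big_cons -/(Defs.bigU _) IH fsetUid.
Qed.

Lemma fsubset_bigU (s : seq {fset atom}) t : t \in s -> t `<=` Defs.bigU s.
Proof. by move=> ts; apply: (@bigfcup_sup _ _ _ _ xpredT id). Qed.

Lemma bigU_fset0 n : Defs.bigU (nseq n fset0) = fset0.
Proof.
by elim: n => [|n IH]; rewrite /Defs.bigU ?big_nil // big_cons -/(Defs.bigU _) IH fsetU0.
Qed.

Lemma bigU_map_fsetU a (s : seq {fset atom}) :
  Defs.bigU [seq a |` t | t <- s] `<=` a |` Defs.bigU s.
Proof.
rewrite /Defs.bigU; elim: s => [|t s IH]; first by rewrite big_nil fsub0set.
rewrite /= !big_cons; apply: fsubset_trans (fsetUS _ IH) _.
by rewrite fsetUACA fsetUid.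
Qed.

Section Derivability.
Variable B : base.

Lemma derivable_axiomW r G D G' D' :
  B r -> premises r = [::] -> conclusion r = (G, D) ->
  G `<=` G' -> D `<=` D' -> derivable B (G', D').
Proof.
move=> Br Pr Cr /fsetUidPl GG' /fsetUidPr DD'.
by rewrite -GG' -DD'; apply: der_ax Br Pr Cr.
Qed.

Lemma derivable_axiom r G D :
  B r -> premises r = [::] -> conclusion r = (G, D) -> derivable B (G, D).
Proof. by move=> Br Pr Cr; apply: derivable_axiomW Br Pr Cr _ _. Qed.

Lemma derivable_weaken G D G' D' :
  derivable B (G, D) -> G `<=` G' -> D `<=` D' -> derivable B (G', D').
Proof.
suff weaken s : derivable B s -> forall X Y, s.1 `<=` X -> s.2 `<=` Y ->
  derivable B (X, Y) by move/weaken; apply.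
clear G D G' D'.
elim=> {s} [r G0 D0 Th Si Br Pr Cr|r G0 D0 ths sis Br Cr Sths Ssis _ IH] G' D' /=.
  by move=> /fsubUsetP[_ ?] /fsubUsetP[? _]; apply: derivable_axiomW Br Pr Cr _ _.
move=> /fsubUsetP[thsG' G0G'] /fsubUsetP[D0D' sisD'].
case Pr: (premises r) => [|p ps].
  exact: derivable_axiomW Br Pr Cr G0G' D0D'.
(* Push the weakening into the premises: reapply the rule with every context
   extension equal to the target contexts. *)
have := @der_mix B r G0 D0 (nseq (size ps).+1 G') (nseq (size ps).+1 D') Br Cr.
rewrite !bigU_nseq Pr !size_nseq (fsetUidPl _ _ G0G') (fsetUidPr _ _ D0D').
apply=> // i lt_i; rewrite !nth_nseq lt_i -Pr; rewrite -Pr in lt_i.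
apply: (IH i lt_i) => /=; [apply/fsetSU/(fsubset_trans _ thsG') | apply/fsetUS/(fsubset_trans _ sisD')];
  by apply/fsubset_bigU/mem_nth; rewrite ?Sths ?Ssis.
Qed.

Lemma derivable_rule1 r p G D :
  B r -> premises r = [:: p] -> conclusion r = (G, D) ->
  derivable B p -> derivable B (G, D).
Proof.
move=> Br Pr Cr; case: p Pr => G1 D1 Pr der1.
have := @der_mix B r G D [:: fset0] [:: fset0] Br Cr.
rewrite Pr (bigU_fset0 1) fset0U fsetU0; apply=> // -[|//] _ /=.
by rewrite fset0U fsetU0.
Qed.

Lemma derivable_rule2 r p1 p2 G D :
  B r -> premises r = [:: p1; p2] -> conclusion r = (G, D) ->
  derivable B p1 -> derivable B p2 -> derivable B (G, D).
Proof.
move=> Br Pr Cr; case: p1 Pr => G1 D1; case: p2 => G2 D2 Pr der1 der2.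
have := @der_mix B r G D [:: fset0; fset0] [:: fset0; fset0] Br Cr.
rewrite Pr (bigU_fset0 2) fset0U fsetU0; apply=> // -[|[|//]] _ /=;
  by rewrite fset0U fsetU0.
Qed.

End Derivability.

Lemma derivable_extends B C s : extends B C -> derivable B s -> derivable C s.
Proof.
move=> BC; elim=> {s} [r G D Th Si Br Pr Cr|r G D ths sis Br Cr S1 S2 _ IH].
  exact: der_ax (BC _ Br) Pr Cr.
exact: der_mix (BC _ Br) Cr S1 S2 IH.
Qed.

Definition add_axiom (B : base) (a : atom) : base :=
  fun r => B r \/ r = mkRule [::] (fset0, [fset a]).

Section Structural.
Variable B : base.
Hypothesis ST_B : extends ST B.

Lemma derivable_id p (G D : {fset atom}) : p \in G -> p \in D -> derivable B (G, D).
Proof.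
move=> pG pD; apply: derivable_axiomW (ST_B (ST_init p fset0 fset0)) _ _ _ _ => //;
  by rewrite fsetU0 fsub1set.
Qed.

Lemma derivable_cut p G1 D1 G2 D2 :
  derivable B (G1, p |` D1) -> derivable B (p |` G2, D2) ->
  derivable B (G1 `|` G2, D1 `|` D2).
Proof. exact: derivable_rule2 (ST_B (ST_cut p G1 D1 G2 D2)) erefl erefl. Qed.

Lemma derivable_cut_succ p D1 D2 :
  derivable B (fset0, p |` D1) -> derivable B (p |` fset0, D2) ->
  derivable B (fset0, D1 `|` D2).
Proof. by move=> der1 /(derivable_cut der1); rewrite fsetU0. Qed.

Lemma deduction a G D :
  derivable (add_axiom B a) (G, D) -> derivable B (a |` G, D).
Proof.
(* Each use of the new axiom [=> a] becomes an instance of the identity [a => a]. *)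
suff deduct s : derivable (add_axiom B a) s -> derivable B (a |` s.1, s.2) by move/deduct.
elim=> {s} [r G0 D0 Th Si [Br|->] Pr Cr|r G0 D0 ths sis [Br|->] Cr Sths Ssis _ IH] /=.
- apply: derivable_weaken (derivable_axiom Br Pr Cr) _ (fsubsetUl _ _).
  by rewrite fsetUA fsubsetUr.
- by case: Cr => <- <-; apply: (@derivable_id a); rewrite !inE ?eqxx ?orbT.
- have := der_mix Br Cr _ Ssis (ths := [seq a |` t | t <- ths]).
  rewrite size_map => /(_ Sths) der; apply: derivable_weaken (der _) _ _ => //.
    by move=> i lt_i; rewrite (nth_map fset0) ?Sths // -fsetUA; apply: IH.
  by rewrite fsetUA fsetSU ?bigU_map_fsetU.
- move: Sths Ssis Cr => /size0nil -> /size0nil -> [<- <-].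
  by apply: (@derivable_id a); rewrite !inE ?eqxx ?orbT.
Qed.

End Structural.

Lemma lsize_cons A G : lsize (A :: G) = (fsize A + lsize G)%N.
Proof. by []. Qed.

Lemma fsize_gt0 A : 0 < fsize A.
Proof. by case: A. Qed.

Lemma supn_fuel n m B acc G : lsize G <= n -> lsize G <= m ->
  supn n B acc G <-> supn m B acc G.
Proof.
elim: n m B acc G => [|n IH] [|m] B acc [|A G] //; rewrite lsize_cons;
  have := fsize_gt0 A; try lia.
move=> _ Gn Gm; case: A Gn Gm => [p||A1 A2|A1 A2|A1 A2] /= Gn Gm.
- by apply: IH; lia.
- by apply: IH; lia.
- by rewrite (IH m _ _ (A1 :: G)) ?(IH m _ _ (A2 :: G)) ?lsize_cons //; lia.
- by apply: IH; rewrite !lsize_cons; lia.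
- have IH1 C Th : supn n C Th [:: A1] <-> supn m C Th [:: A1].
    by apply: IH; rewrite /lsize /= addn0; lia.
  have IH2 C Th : supn n C Th (A2 :: G) <-> supn m C Th (A2 :: G).
    by apply: IH; rewrite lsize_cons; lia.
  by split=> H C BC Th /IH1 /(H C BC) /IH2.
Qed.

Lemma supn_supports n B acc G : lsize G <= n -> supn n B acc G <-> supports B acc G.
Proof. by move=> Gn; apply: supn_fuel. Qed.

Lemma supports_nil B Th : supports B Th [::] <-> derivable B (fset0, Th).
Proof. by []. Qed.

Lemma supports_fuel n B Th G : lsize G = n.+1 -> supports B Th G = supn n.+1 B Th G.
Proof. by rewrite /supports => ->. Qed.

Section SupportClauses.
Variables (B : base) (Th : {fset atom}) (G : seq form).

Lemma supports_atom p : supports B Th (Atom p :: G) <-> supports B (p |` Th) G.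
Proof. exact: supn_supports. Qed.

Lemma supports_bot : supports B Th (Bot :: G) <-> supports B Th G.
Proof. exact: supn_supports. Qed.

Lemma supports_and A1 A2 : supports B Th (And A1 A2 :: G) <->
  supports B Th (A1 :: G) /\ supports B Th (A2 :: G).
Proof.
rewrite (supports_fuel (n := fsize A1 + fsize A2 + lsize G)) //=.
by rewrite !supn_supports // !lsize_cons; lia.
Qed.

Lemma supports_or A1 A2 :
  supports B Th (Or A1 A2 :: G) <-> supports B Th (A1 :: A2 :: G).
Proof.
rewrite (supports_fuel (n := fsize A1 + fsize A2 + lsize G)) //=.
by rewrite !supn_supports // !lsize_cons; lia.
Qed.

Lemma supports_imp A1 A2 : supports B Th (Imp A1 A2 :: G) <->
  forall C, extends B C -> forall Th', supports C Th' [:: A1] ->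
  supports C (Th' `|` Th) (A2 :: G).
Proof.
rewrite (supports_fuel (n := fsize A1 + fsize A2 + lsize G)) //=.
have fuel1 C Th' : supn (fsize A1 + fsize A2 + lsize G) C Th' [:: A1] <->
                   supports C Th' [:: A1].
  by apply: supn_supports; rewrite /lsize /= addn0; lia.
have fuel2 C Th' : supn (fsize A1 + fsize A2 + lsize G) C Th' (A2 :: G) <->
                   supports C Th' (A2 :: G).
  by apply: supn_supports; rewrite lsize_cons; lia.
by split=> H C BC Th' /fuel1 /(H C BC) /fuel2.
Qed.

End SupportClauses.

Lemma subformulas_refl A : A \in subformulas A.
Proof. by case: A => * /=; rewrite inE eqxx. Qed.

Lemma subformulas_trans A B C :
  A \in subformulas B -> B \in subformulas C -> A \in subformulas C.
Proof.
move=> AB; elim: C => [p||C1 IH1 C2 IH2|C1 IH1 C2 IH2|C1 IH1 C2 IH2] /=;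
  rewrite ?inE ?mem_cat.
1,2: by move/eqP=> E; move: AB; rewrite E /= inE.
all: case/orP=> [/eqP E|/orP[/IH1|/IH2] ->]; rewrite ?orbT //.
all: by move: AB; rewrite E /= !inE ?mem_cat.
Qed.

Lemma subformulas_of_closed G0 A :
  A \in subformulas_of G0 -> {subset subformulas A <= subformulas_of G0}.
Proof.
move=> /flattenP[_ /mapP[C CG0 ->] AC] x xA; apply/flattenP.
by exists (subformulas C); [apply: map_f | apply: subformulas_trans xA AC].
Qed.

Lemma extends_trans B C D : extends B C -> extends C D -> extends B D.
Proof. by move=> BC CD r /BC /CD. Qed.

Lemma extends_UST_sim S alpha B : extends (UST S alpha) B -> extends (sim_base S alpha) B.
Proof. by move=> UB r Ur; apply: UB; left. Qed.

Lemma extends_UST_ST S alpha B : extends (UST S alpha) B -> extends ST B.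
Proof. by move=> UB r STr; apply: UB; right. Qed.

Section Simulation.
Variables (S0 : seq form) (alpha : form -> atom).

Definition sim_atoms (G : seq form) : {fset atom} := [fset p | p in map alpha G].

Lemma sim_atoms_nil : sim_atoms [::] = fset0.
Proof. by apply/fsetP => x; rewrite !inE. Qed.

Lemma sim_atoms_cons A G : sim_atoms (A :: G) = alpha A |` sim_atoms G.
Proof. by apply/fsetP => x; rewrite !inE. Qed.

Section RightRules.
Variable B : base.
Hypotheses (sim_B : extends (sim_base S0 alpha) B) (ST_B : extends ST B).

Lemma derivable_sim_bot X :
  Bot \in S0 -> derivable B (fset0, alpha Bot |` X) <-> derivable B (fset0, X).
Proof.
move=> botS; split=> [der|].
  have Lbot := @derivable_axiom B _ _ _ (sim_B (@U_Lbot S0 alpha fset0 fset0 botS)) erefl erefl.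
  by have := derivable_cut_succ ST_B der Lbot; rewrite fsetU0.
exact: @derivable_rule1 B _ _ _ _ (sim_B (@U_Rbot S0 alpha fset0 X botS)) erefl erefl.
Qed.

Lemma derivable_sim_and X A1 A2 : And A1 A2 \in S0 ->
  derivable B (fset0, alpha (And A1 A2) |` X) <->
  derivable B (fset0, alpha A1 |` X) /\ derivable B (fset0, alpha A2 |` X).
Proof.
move=> andS; split=> [der|[der1 der2]]; last first.
  have := @derivable_rule2 B _ _ _ _ _ (sim_B (@U_Rand S0 alpha A1 A2 fset0 X fset0 X andS))
    erefl erefl der1 der2.
  by rewrite fsetUid fsetUid.
have Land a : a \in alpha A1 |` (alpha A2 |` fset0) -> derivable B (fset0, X `|` [fset a]).
  move=> a_in; have id_a : derivable B (alpha A1 |` (alpha A2 |` fset0), [fset a]).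
    by apply: (@derivable_id _ ST_B a) => //; rewrite inE.
  have := @derivable_rule1 B _ _ _ _
    (sim_B (@U_Land S0 alpha A1 A2 fset0 [fset a] andS)) erefl erefl id_a.
  apply: (derivable_cut_succ ST_B der).
by split; rewrite fsetUC; apply: Land; rewrite !inE eqxx ?orbT.
Qed.

Lemma derivable_sim_or X A1 A2 : Or A1 A2 \in S0 ->
  derivable B (fset0, alpha (Or A1 A2) |` X) <->
  derivable B (fset0, alpha A1 |` (alpha A2 |` X)).
Proof.
move=> orS; split=> [der|]; last first.
  exact: @derivable_rule1 B _ _ _ _ (sim_B (@U_Ror S0 alpha A1 A2 fset0 X orS)) erefl erefl.
have id_a a : derivable B (a |` fset0, [fset a]).
  by apply: (@derivable_id _ ST_B a); rewrite !inE eqxx.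
have := @derivable_rule2 B _ _ _ _ _ (sim_B (@U_Lor S0 alpha A1 A2
  fset0 [fset alpha A1] fset0 [fset alpha A2] orS)) erefl erefl (id_a _) (id_a _).
rewrite fsetU0 => Lor.
by rewrite fsetUA fsetUC; apply: (derivable_cut_succ ST_B der).
Qed.

Lemma derivable_sim_imp X A1 A2 : Imp A1 A2 \in S0 ->
  derivable B (fset0, alpha (Imp A1 A2) |` X) <->
  forall C, extends B C -> forall Th, derivable C (fset0, alpha A1 |` Th) ->
  derivable C (fset0, alpha A2 |` (Th `|` X)).
Proof.
move=> impS; split=> [der C BC Th der1|der].
  have ST_C : extends ST C := extends_trans ST_B BC.
  have id_A2 : derivable C (alpha A2 |` fset0, [fset alpha A2]).
    by apply: (@derivable_id _ ST_C (alpha A2)); rewrite !inE eqxx.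
  have := @derivable_rule2 C _ _ _ _ _ (BC _ (sim_B (@U_Limp S0 alpha A1 A2
    fset0 Th fset0 [fset alpha A2] impS))) erefl erefl der1 id_A2.
  rewrite fsetU0 => Limp.
  have := derivable_cut_succ ST_C (derivable_extends BC der) Limp.
  by rewrite fsetUC (fsetUC Th) -fsetUA.
(* Instantiate the (Inf) clause at the base extended by the axiom [=> p^A1],
   which the deduction theorem then turns into the antecedent of R->. *)
pose C := add_axiom B (alpha A1).
have BC : extends B C by move=> r Br; left.
have ax_A1 : derivable C (fset0, alpha A1 |` fset0).
  by rewrite fsetU0; apply: (@derivable_axiom C _ _ _ (or_intror erefl)).
have := deduction ST_B (der C BC fset0 ax_A1); rewrite fset0U => der'.
exact: @derivable_rule1 B _ _ _ _ (sim_B (@U_Rimp S0 alpha A1 A2 fset0 X impS))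
  erefl erefl der'.
Qed.

End RightRules.

Hypothesis atom_fixed : forall p, Atom p \in S0 -> alpha (Atom p) = p.
Hypothesis S0_closed : forall A, A \in S0 -> {subset subformulas A <= S0}.

Lemma supports_sim n G B Th : lsize G <= n -> all (mem S0) G ->
  extends (UST S0 alpha) B ->
  supports B Th G <-> derivable B (fset0, sim_atoms G `|` Th).
Proof.
elim: n G B Th => [|n IH] [|A G] B Th.
1,3: by move=> *; rewrite supports_nil sim_atoms_nil fset0U.
  by rewrite lsize_cons; have := fsize_gt0 A; lia.
rewrite lsize_cons /= => Gn /andP[AS GS] UB.
have IHC Sg C Th' : lsize Sg <= n -> all (mem S0) Sg -> extends B C ->
    supports C Th' Sg <-> derivable C (fset0, sim_atoms Sg `|` Th').
  by move=> Sgn SgS BC; apply: IH => //; apply: extends_trans BC.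
have IHB Sg Th' : lsize Sg <= n -> all (mem S0) Sg ->
    supports B Th' Sg <-> derivable B (fset0, sim_atoms Sg `|` Th').
  by move=> Sgn SgS; apply: IHC.
have [simB STB] := (extends_UST_sim UB, extends_UST_ST UB).
have subS0 := S0_closed AS.
rewrite sim_atoms_cons -fsetUA.
case: A AS Gn subS0 => [p||A1 A2|A1 A2|A1 A2] AS Gn subS0; rewrite [fsize _]/= in Gn.
- by rewrite supports_atom IHB ?atom_fixed // fsetUCA.
- by rewrite supports_bot IHB ?derivable_sim_bot //; lia.
all: have [A1S A2S] : A1 \in S0 /\ A2 \in S0
  by split; apply: subS0; rewrite /= !(inE, mem_cat) subformulas_refl ?orbT.
- rewrite supports_and derivable_sim_and // !IHB /= ?A1S ?A2S ?GS ?lsize_cons //; try lia.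
  by rewrite !sim_atoms_cons -!fsetUA.
- rewrite supports_or derivable_sim_or // IHB /= ?A1S ?A2S ?GS ?lsize_cons //; try lia.
  by rewrite !sim_atoms_cons -!fsetUA.
- have IH1 C Th' : extends B C ->
      supports C Th' [:: A1] <-> derivable C (fset0, alpha A1 |` Th').
    move=> BC; rewrite IHC /= ?A1S //; last by rewrite /lsize /= addn0; lia.
    by rewrite sim_atoms_cons sim_atoms_nil fsetU0.
  have IH2 C Th' : extends B C -> supports C (Th' `|` Th) (A2 :: G) <->
      derivable C (fset0, alpha A2 |` (Th' `|` (sim_atoms G `|` Th))).
    move=> BC; rewrite IHC /= ?A2S ?GS //; last by rewrite lsize_cons; lia.
    by rewrite sim_atoms_cons -fsetUA (fsetUCA (sim_atoms G)).
  rewrite supports_imp derivable_sim_imp //.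
  by split=> H C BC Th' /(IH1 C Th' BC) /(H C BC Th') /(IH2 C Th' BC).
Qed.

End Simulation.

Theorem lemma5 (Gm Dl : seq form) (alpha : form -> atom)
  (Halpha : atomic_mapping (Gm ++ Dl) alpha)
  (Th : {fset atom}) (Sg : seq form)
  (HSne : Sg <> [::])
  (HSsub : forall A, A \in Sg -> A \in subformulas_of (Gm ++ Dl))
  (B : base) (HB : extends (UST (subformulas_of (Gm ++ Dl)) alpha) B) :
  supports B Th Sg <->
  derivable B (fset0, [fset p | p in map alpha Sg] `|` Th).
Proof.
apply: (@supports_sim _ _ Halpha.2 (@subformulas_of_closed _) (lsize Sg)) => //.
exact/allP.
Qed.
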